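(* Assume $\mathcal{W}^\ast=\sum_{k=1}^K\mathcal{W}^{\ast(k)}$ with $\|\boldsymbol{W}^{\ast(l)}_{(k)}\|_{S_\infty}\le\alpha$ for all $k\ne l$, and let $(\hat{\mathcal{W}}^{(k)})_k$ be a solution of $$\min_{\mathcal{W}^{(1)},\dots,\mathcal{W}^{(K)}}\ \tfrac12\Bigl\|\mathcal{Y}-\sum_{k}\mathcal{W}^{(k)}\Bigr\|_F^2+\lambda\sum_{k}\|\boldsymbol{W}^{(k)}_{(k)}\|_{S_1}\quad\text{s.t. } \|\boldsymbol{W}^{(k)}_{(l)}\|_{S_\infty}\le\alpha\ \ \forall\, l\ne k$$ (for some tensor $\mathcal{Y}$ and $\lambda>0$). Let $\Delta^{(k)}=\hat{\mathcal{W}}^{(k)}-\mathcal{W}^{\ast(k)}$ and $\Delta=\sum_{k=1}^K\Delta^{(k)}$. Then $$\frac12\sum_{k=1}^K\|\Delta^{(k)}\|_F^2\le\frac12\|\Delta\|_F^2+\alpha(K-1)\sum_{k=1}^K\|\boldsymbol{\Delta}^{(k)}_{(k)}\|_{S_1}.$$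
   Context: Tensors are elements of $\mathbb{R}^{n_1\times\cdots\times n_K}$ with $N=\prod_k n_k$; $\|\cdot\|_F$ is the Euclidean norm of the vectorization. For a tensor $\mathcal{W}^{(l)}$ (resp. $\Delta^{(k)}$), $\boldsymbol{W}^{(l)}_{(k)}$ (resp. $\boldsymbol{\Delta}^{(k)}_{(k)}$) in $\mathbb{R}^{n_k\times N/n_k}$ is its mode-$k$ unfolding (columns are mode-$k$ fibers). $\|\cdot\|_{S_1}$ is the trace norm and $\|\cdot\|_{S_\infty}$ the spectral norm; $\alpha\ge0$. *)

From HB Require Import structures.
From mathcomp Require Import all_boot all_order all_algebra.
From Stdlib Require Import ClassicalEpsilon.
Set Implicit Arguments. Unset Strict Implicit. Unset Printing Implicit Defensive.
Import Order.TTheory GRing.Theory Num.Theory.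
Local Open Scope ring_scope.

Definition fmat (R : rcfType) (rows cols : finType) := rows -> cols -> R.

(* Compact SVD data: r positive singular values sigma, orthonormal left
   singular vectors u and right singular vectors v. *)
Definition svd_data (R : rcfType) (rows cols : finType) :=
  {r : nat & (('I_r -> R) * ('I_r -> rows -> R) * ('I_r -> cols -> R))%type}.

Definition is_svd (R : rcfType) (rows cols : finType) (A : fmat R rows cols)
    (d : svd_data R rows cols) : Prop :=
  let: existT r (sigma, u, v) := d in
  [/\ forall a, 0 < sigma a,
      forall a b, \sum_(x : rows) u a x * u b x = (a == b)%:R,
      forall a b, \sum_(y : cols) v a y * v b y = (a == b)%:R &
      forall x y, A x y = \sum_(a < r) sigma a * u a x * v a y].

Definition svd_inhabited (R : rcfType) (rows cols : finType) :
  inhabited (svd_data R rows cols) :=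
  inhabits (existT _ 0%N ((fun _ => 0), (fun _ _ => 0), (fun _ _ => 0))).

Definition svd_of (R : rcfType) (rows cols : finType) (A : fmat R rows cols) :=
  epsilon (@svd_inhabited R rows cols) (is_svd A).

Definition sing_vals (R : rcfType) (rows cols : finType) (A : fmat R rows cols) :
  {r : nat & 'I_r -> R} :=
  let: existT r (sigma, _, _) := svd_of A in existT _ r sigma.

Definition trace_norm (R : rcfType) (rows cols : finType) (A : fmat R rows cols) : R :=
  let: existT r sigma := sing_vals A in \sum_(a < r) sigma a.

Definition spec_norm (R : rcfType) (rows cols : finType) (A : fmat R rows cols) : R :=
  let: existT r sigma := sing_vals A in \big[Num.max/0]_(a < r) sigma a.

Definition tidx (K : nat) (n : 'I_K -> nat) := {dffun forall j : 'I_K, 'I_(n j)}.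
Definition tensor (R : rcfType) (K : nat) (n : 'I_K -> nat) := tidx n -> R.

Definition frob2 (R : rcfType) K (n : 'I_K -> nat) (T : tensor R n) : R :=
  \sum_(x : tidx n) T x ^+ 2.

Definition tadd (R : rcfType) K (n : 'I_K -> nat) (S T : tensor R n) : tensor R n :=
  fun x => S x + T x.
Definition tsub (R : rcfType) K (n : 'I_K -> nat) (S T : tensor R n) : tensor R n :=
  fun x => S x - T x.
Definition tsum (R : rcfType) K (n : 'I_K -> nat) (W : 'I_K -> tensor R n) : tensor R n :=
  fun x => \sum_(k < K) W k x.

(* column index of the mode-k unfolding: the indices of all other modes *)
Definition colidx (K : nat) (n : 'I_K -> nat) (k : 'I_K) :=
  {dffun forall j : {j : 'I_K | j != k}, 'I_(n (val j))}.

(* full index from a mode-k index i and the other indices c *)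
Definition merge (K : nat) (n : 'I_K -> nat) (k : 'I_K) (i : 'I_(n k))
    (c : colidx n k) : tidx n :=
  @finfun _ (fun j => 'I_(n j)) (fun j : 'I_K =>
    (if j == k as b return (j == k) = b -> 'I_(n j)
     then fun e => cast_ord (congr1 n (esym (eqP e))) i
     else fun e => c (exist _ j (negbT e))) (erefl _)).

(* mode-k unfolding W_(k) : an n_k x (N / n_k) matrix whose columns are the
   mode-k fibers (column order is irrelevant for the norms used) *)
Definition unfold (R : rcfType) K (n : 'I_K -> nat) (k : 'I_K) (T : tensor R n) :
  fmat R 'I_(n k) (colidx n k) := fun i c => T (merge i c).
Arguments unfold {R K n} k T.

Definition objective (R : rcfType) K (n : 'I_K -> nat) (Y : tensor R n) (lam : R)
    (W : 'I_K -> tensor R n) : R :=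
  2^-1 * frob2 (tsub Y (tsum W)) + lam * \sum_(k < K) trace_norm (unfold k (W k)).

Definition feasible (R : rcfType) K (n : 'I_K -> nat) (alpha : R)
    (W : 'I_K -> tensor R n) : Prop :=
  forall k l : 'I_K, l != k -> spec_norm (unfold l (W k)) <= alpha.

(* Expanding the square, ||sum_k Delta_k||_F^2 = sum_k ||Delta_k||_F^2 +
   sum_{k <> l} <Delta_k, Delta_l>, so it suffices to bound each cross term
   from below.  Reading <Delta_k, Delta_l> through the mode-k unfolding
   (an isometry) and using trace duality |<A, B>| <= ||A||_{S_1} ||B||_{S_oo},
   the feasibility of What and the assumption on Wst give
   |<Delta_k, What_l - Wst_l>| <= 2 alpha ||Delta_k,(k)||_{S_1}; summing over
   the K - 1 indices l <> k yields the claim. *)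
From Pilot Require Import Defs.
From HB Require Import structures.
From mathcomp Require Import all_boot all_order all_algebra.
From mathcomp Require Import complex.
From mathcomp Require Import ring lra.
From Stdlib Require Import ClassicalEpsilon.
Set Implicit Arguments. Unset Strict Implicit. Unset Printing Implicit Defensive.
Import Order.TTheory GRing.Theory Num.Theory.
Local Open Scope ring_scope.
Section RealMatrices.
Variable R : rcfType.

(* A nonzero real symmetric matrix has a nonzero real eigenvalue: diagonalize
   it over R[i] by the spectral theorem and take a nonzero (real) diagonal
   entry. *)
Lemma sym_nonzero_eigenvalue n (S : 'M[R]_n) : S^T = S -> S != 0 ->
  exists2 lam : R, lam != 0 & \det (S - lam%:M) = 0.
Proof.
move=> St Sn0.
pose f := real_complex R.
pose Sc : 'M[R[i]]_n := map_mx f S.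
have Sreal : Sc \is a realmx.
  by apply/mxOverP => i j; rewrite mxE; apply/complex_realP; exists (S i j).
have Ssym : Sc \is symmetricmx.
  apply/is_hermitianmxP; rewrite expr0 scale1r map_mx_id //.
  by apply/matrixP => a b; rewrite !mxE -[in RHS]St mxE.
have Sherm := realsym_hermsym Ssym Sreal.
have /orthomx_spectralP Sdiag := hermitian_normalmx Sherm.
have dreal := hermitian_spectral_diag_real Sherm.
set P := spectralmx Sc in Sdiag.
set d := spectral_diag Sc in Sdiag dreal.
have Sc0 : Sc != 0.
  apply: contra Sn0 => /eqP /matrixP Sc0; apply/eqP/matrixP => a b.
  by move: (Sc0 a b); rewrite !mxE => /eqP; rewrite -(rmorph0 f) (inj_eq (@complexI R)) => /eqP.
have [i di0] : exists i, d 0 i != 0.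
  apply/existsP; apply: contraNT Sc0; rewrite negb_exists => /forallP d0.
  rewrite Sdiag; apply/eqP; suff -> : diag_mx d = 0 by rewrite mulmx0 mul0mx.
  apply/matrixP => a b; rewrite !mxE; case: eqP => [->|_]; rewrite ?mulr0n //.
  by move: (d0 b); rewrite negbK => /eqP ->; rewrite mul0rn.
have dr : d 0 i \is Num.real by move/mxOverP: dreal; apply.
exists (complex.Re (d 0 i)).
  apply: contra di0 => /eqP h; rewrite -(RRe_real dr) h; apply/eqP; exact: (rmorph0 f).
apply: (@complexI R); rewrite (rmorph0 f) -det_map_mx map_mxB /= map_scalar_mx /=.
rewrite (RRe_real dr) -/Sc Sdiag.
have -> : (d 0 i)%:M = invmx P *m (d 0 i)%:M *m P.
  by rewrite scalar_mxC -mulmxA mulVmx ?spectral_unit // mulmx1.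
rewrite -mulmxBl -mulmxBr !det_mulmx det_inv.
have -> : diag_mx d - (d 0 i)%:M = diag_mx (d - const_mx (d 0 i)).
  by apply/matrixP => a b; rewrite !mxE mulrnBl.
by rewrite det_diag (bigD1 i) //= !mxE subrr mul0r mulr0 mul0r.
Qed.

Lemma sqnorm_ge0 k (x : 'rV[R]_k) : 0 <= (x *m x^T) 0 0.
Proof. by rewrite mxE; apply: sumr_ge0 => j _; rewrite mxE -expr2 sqr_ge0. Qed.

Lemma sqnorm_eq0 k (x : 'rV[R]_k) : ((x *m x^T) 0 0 == 0) = (x == 0).
Proof.
apply/idP/idP => [|/eqP ->]; last by rewrite mul0mx mxE.
rewrite mxE => /eqP x0; apply/eqP/matrixP => i j; rewrite mxE ord1.
have sq0 a : true -> 0 <= x 0 a * x^T a 0 by rewrite mxE -expr2 sqr_ge0.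
by move: (psumr_eq0P sq0 x0 (i:=j) isT); rewrite mxE -expr2 => /eqP; rewrite sqrf_eq0 => /eqP.
Qed.

(* A^T A = 0 forces A = 0 (its diagonal holds the squared column norms). *)
Lemma trmx_mul_eq0 m n (A : 'M[R]_(m, n)) : A^T *m A = 0 -> A = 0.
Proof.
move=> AtA0; apply/matrixP => i j; rewrite [RHS]mxE.
have := congr1 (fun M : 'M[R]_n => M j j) AtA0; rewrite !mxE => col0.
have sq0 a : true -> 0 <= A^T j a * A a j by rewrite mxE -expr2 sqr_ge0.
by move: (psumr_eq0P sq0 col0 (i:=i) isT); rewrite mxE -expr2 => /eqP; rewrite sqrf_eq0 => /eqP.
Qed.

(* Take v a unit eigenvector of A^T A for
   a nonzero eigenvalue lam (then lam = |v A^T|^2 > 0), sg = sqrt lam and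
   u = sg^-1 v A^T. *)
Lemma singular_triple m n (A : 'M[R]_(m, n)) : A != 0 ->
  exists sg (u : 'rV_m) (v : 'rV_n),
    [/\ 0 < sg, u *m u^T = 1%:M, v *m v^T = 1%:M,
        u *m A = sg *: v & A *m v^T = sg *: u^T].
Proof.
move=> An0; pose S := A^T *m A.
have St : S^T = S by rewrite /S trmx_mul trmxK.
have Sn0 : S != 0 by apply: contra An0 => /eqP /trmx_mul_eq0 ->.
have [lam lam0 detS] := sym_nonzero_eigenvalue St Sn0.
have /det0P [w w0 wS] : \det (S - lam%:M) == 0 by rewrite detS.
have wS' : w *m S = lam *: w.
  by move/eqP: wS; rewrite mulmxBr mul_mx_scalar subr_eq0 => /eqP.
set nw := (w *m w^T) 0 0.
have nw0 : 0 < nw by rewrite lt0r sqnorm_eq0 w0 sqnorm_ge0.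
pose v := (Num.sqrt nw)^-1 *: w.
have vv : v *m v^T = 1%:M.
  rewrite [LHS]mx11_scalar; congr (_%:M).
  rewrite /v linearZ /= -scalemxAl -scalemxAr mxE [X in _ * X]mxE -/nw mulrA.
  by rewrite -expr2 exprVn sqr_sqrtr ?ltW // mulVf // gt_eqF.
have vS : v *m S = lam *: v by rewrite /v -scalemxAl wS' scalerA mulrC -scalerA.
clearbody v; pose x := v *m A^T.
have xx : x *m x^T = lam%:M.
  by rewrite /x trmx_mul trmxK mulmxA -(mulmxA v) -/S vS -scalemxAl vv scalemx1.
have lam_gt0 : 0 < lam.
  by move: (sqnorm_ge0 x); rewrite xx mxE eqxx mulr1n lt0r lam0.
pose sg := Num.sqrt lam.
have sg_gt0 : 0 < sg by rewrite sqrtr_gt0.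
have sg2 : sg ^+ 2 = lam by rewrite sqr_sqrtr ?ltW.
exists sg, (sg^-1 *: x), v; split => //.
- rewrite linearZ /= -scalemxAl -scalemxAr xx scalerA scale_scalar_mx -sg2 expr2.
  by rewrite mulrACA mulVf ?gt_eqF // mulr1.
- rewrite /x -scalemxAl -mulmxA -/S vS scalerA -sg2.
  by rewrite expr2 mulrA mulVf ?gt_eqF // mul1r.
by rewrite linearZ /= scalerA divff ?gt_eqF // scale1r /x trmx_mul trmxK.
Qed.

(* Removing a singular triple strictly lowers the rank: A' = A - sg u^T v
   equals (1 - u^T u) A, so its row space lies in that of A, but misses
   sg v = u A since A' v^T = 0 while v v^T = 1. *)
Lemma deflation_rank m n (A : 'M[R]_(m, n)) sg (u : 'rV_m) (v : 'rV_n) :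
  0 < sg -> u *m u^T = 1%:M -> v *m v^T = 1%:M ->
  u *m A = sg *: v -> A *m v^T = sg *: u^T ->
  (\rank (A - sg *: (u^T *m v))%R < \rank A)%N.
Proof.
move=> sg_gt0 uu vv uA Av; set A' := A - _.
have A'v : A' *m v^T = 0.
  by rewrite /A' mulmxBl Av -scalemxAl -mulmxA vv mulmx1 subrr.
have A'E : A' = (1%:M - u^T *m u) *m A.
  by rewrite mulmxBl mul1mx -mulmxA uA -scalemxAr.
apply: rank_ltmx; rewrite ltmxE {1}A'E submxMl /=; apply/negP => sAA'.
have /submxP [D vD] : (sg *: v <= A')%MS by rewrite -uA (submx_trans (submxMl u A)).
have := congr1 (fun M => M *m v^T) vD.
rewrite -mulmxA A'v mulmx0 -scalemxAl vv => /matrixP/(_ 0 0).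
by rewrite !mxE eqxx mulr1 => /eqP; rewrite (gt_eqF sg_gt0).
Qed.

Lemma svd_kernel m n r (s : 'rV[R]_r) (U : 'M[R]_(r, m)) (V : 'M[R]_(r, n))
    (w : 'rV[R]_n) :
  (forall a, 0 < s 0 a) -> U *m U^T = 1%:M -> U^T *m diag_mx s *m V *m w^T = 0 ->
  V *m w^T = 0.
Proof.
move=> s_gt0 UU Aw.
have : U *m (U^T *m diag_mx s *m V *m w^T) = 0 by rewrite Aw mulmx0.
rewrite !mulmxA UU mul1mx -!mulmxA mul_diag_mx => /matrixP sVw.
apply/matrixP => a b; move: (sVw a b); rewrite !mxE => /eqP.
by rewrite mulf_eq0 (gt_eqF (s_gt0 a)) /= => /eqP.
Qed.

(* Singular value decomposition A = U^T diag(s) V with s > 0 and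
   orthonormal rows U, V, by induction on the rank via deflation. *)
Lemma svd_mx m n (A : 'M[R]_(m, n)) :
  exists r (s : 'rV[R]_r) (U : 'M[R]_(r, m)) (V : 'M[R]_(r, n)),
    [/\ forall a, 0 < s 0 a, U *m U^T = 1%:M, V *m V^T = 1%:M &
        A = U^T *m diag_mx s *m V].
Proof.
have [k] := ubnP (\rank A); elim: k A => // k IH A rkA.
have [->|An0] := eqVneq A 0.
  exists 0%N, 0, 0, 0; split; first by move=> [].
  - by rewrite [LHS]flatmx0 [RHS]flatmx0.
  - by rewrite [LHS]flatmx0 [RHS]flatmx0.
  - by rewrite mulmx0.
have [sg [u [v [sg_gt0 uu vv uA Av]]]] := singular_triple An0.
set A' := A - sg *: (u^T *m v).
have rkA' := deflation_rank sg_gt0 uu vv uA Av.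
have [r [s [U [V [s_gt0 UU VV A'E]]]]] := IH A' (leq_trans rkA' rkA).
have Vv : V *m v^T = 0.
  apply: (svd_kernel s_gt0 UU); rewrite -A'E.
  by rewrite /A' mulmxBl Av -scalemxAl -mulmxA vv mulmx1 subrr.
have Uu : U *m u^T = 0.
  have A'tE : A'^T = V^T *m diag_mx s *m U.
    by rewrite A'E !trmx_mul trmxK tr_diag_mx mulmxA.
  apply: (svd_kernel (V := U) s_gt0 VV); rewrite -A'tE -trmx_mul.
  by rewrite /A' mulmxBr uA -scalemxAr mulmxA uu mul1mx subrr trmx0.
exists (1 + r)%N, (row_mx (const_mx sg) s), (col_mx u U), (col_mx v V); split.
- by move=> a; rewrite -[a]splitK; case: (split a) => j /=; rewrite ?row_mxEl ?row_mxEr ?mxE.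
- rewrite tr_col_mx mul_col_row uu Uu [RHS](scalar_mx_block 1 r) UU.
  by rewrite -[u *m _]trmxK trmx_mul trmxK Uu trmx0.
- rewrite tr_col_mx mul_col_row vv Vv [RHS](scalar_mx_block 1 r) VV.
  by rewrite -[v *m _]trmxK trmx_mul trmxK Vv trmx0.
rewrite tr_col_mx diag_mx_row mul_row_block !mulmx0 addr0 add0r mul_row_col.
by rewrite -A'E diag_const_mx mul_mx_scalar -scalemxAl /A' addrC subrK.
Qed.

End RealMatrices.

Section FiniteMatrices.
Variable R : rcfType.

Lemma sum_enum_rank (T : finType) (F : 'I_#|T| -> R) :
  \sum_(i < #|T|) F i = \sum_(x : T) F (enum_rank x).
Proof.
rewrite (reindex (@enum_rank T)) //.
by exists enum_val => x _; [exact: enum_rankK | exact: enum_valK].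
Qed.

Lemma svd_exists (rows cols : finType) (A : fmat R rows cols) : exists d, is_svd A d.
Proof.
pose M := \matrix_(i < #|rows|, j < #|cols|) A (enum_val i) (enum_val j).
have [r [s [U [V [s_gt0 UU VV ME]]]]] := svd_mx M.
exists (existT _ r ((fun a => s 0 a), (fun a x => U a (enum_rank x)),
                    (fun a y => V a (enum_rank y)))).
split => //.
- move=> a b; rewrite -(sum_enum_rank (fun i => U a i * U b i)).
  have := congr1 (fun X : 'M[R]_r => X a b) UU; rewrite !mxE => <-.
  by apply: eq_bigr => i _; rewrite mxE.
- move=> a b; rewrite -(sum_enum_rank (fun i => V a i * V b i)).
  have := congr1 (fun X : 'M[R]_r => X a b) VV; rewrite !mxE => <-.
  by apply: eq_bigr => i _; rewrite mxE.
move=> x y; have := congr1 (fun X : 'M[R]_(_, _) => X (enum_rank x) (enum_rank y)) ME.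
rewrite mxE !enum_rankK => ->; rewrite mul_mx_diag mxE; apply: eq_bigr => a _.
by rewrite !mxE [_ * s 0 a]mulrC.
Qed.

Lemma svd_of_spec (rows cols : finType) (A : fmat R rows cols) : is_svd A (svd_of A).
Proof. by apply: epsilon_spec; exact: svd_exists. Qed.

Lemma trace_norm_ge0 (rows cols : finType) (A : fmat R rows cols) : 0 <= trace_norm A.
Proof.
have := svd_of_spec A; rewrite /trace_norm /sing_vals.
by case: (svd_of A) => r [[s u] v] [s_gt0 _ _ _]; apply: sumr_ge0 => a _; exact: ltW.
Qed.

Lemma bessel (T : finType) r (p : 'I_r -> T -> R) (u : T -> R) :
  (forall a b, \sum_x p a x * p b x = (a == b)%:R) ->
  \sum_b (\sum_x u x * p b x) ^+ 2 <= \sum_x u x ^+ 2.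
Proof.
move=> po; pose al b := \sum_x u x * p b x.
pose s x := \sum_b al b * p b x.
have us : \sum_x u x * s x = \sum_b al b ^+ 2.
  rewrite /s (eq_bigr (fun x => \sum_b al b * (u x * p b x))); last first.
    by move=> x _; rewrite mulr_sumr; apply: eq_bigr => b _; rewrite mulrCA.
  by rewrite exchange_big /=; apply: eq_bigr => b _; rewrite -mulr_sumr expr2.
have ss : \sum_x s x ^+ 2 = \sum_b al b ^+ 2.
  rewrite (eq_bigr (fun x => \sum_b \sum_c al b * al c * (p b x * p c x))); last first.
    move=> x _; rewrite expr2 /s mulr_suml; apply: eq_bigr => b _; rewrite mulr_sumr.
    by apply: eq_bigr => c _; ring.
  rewrite exchange_big /=; apply: eq_bigr => b _.
  rewrite exchange_big /= (bigD1 b) //= -mulr_sumr po eqxx mulr1 big1 ?addr0 ?expr2 //.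
  by move=> c /negPf cb; rewrite -mulr_sumr po eq_sym cb mulr0.
have : 0 <= \sum_x (u x - s x) ^+ 2 by apply: sumr_ge0 => x _; exact: sqr_ge0.
rewrite (eq_bigr (fun x => u x ^+ 2 - (u x * s x) *+ 2 + s x ^+ 2)) => [|x _]; last first.
  by rewrite sqrrB.
by rewrite big_split /= sumrB sumrMnl us ss mulr2n -subr_ge0 => ?; lra.
Qed.

Definition mdot (rows cols : finType) (A B : fmat R rows cols) : R :=
  \sum_x \sum_y A x y * B x y.

Definition rank1 (rows cols : finType) (u : rows -> R) (v : cols -> R) :
  fmat R rows cols := fun x y => u x * v y.

Lemma mdotC (rows cols : finType) (A B : fmat R rows cols) : mdot A B = mdot B A.
Proof. by apply: eq_bigr => x _; apply: eq_bigr => y _; rewrite mulrC. Qed.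

Lemma mdot_rank1 (rows cols : finType) (u f : rows -> R) (v g : cols -> R) :
  mdot (rank1 u v) (rank1 f g) = (\sum_x u x * f x) * (\sum_y v y * g y).
Proof.
rewrite /mdot mulr_suml; apply: eq_bigr => x _; rewrite mulr_sumr.
by apply: eq_bigr => y _; rewrite /rank1; ring.
Qed.

Lemma mdot_svd (rows cols : finType) (A F : fmat R rows cols) r s u v :
  is_svd A (existT _ r (s, u, v)) ->
  mdot A F = \sum_(a < r) s a * mdot (rank1 (u a) (v a)) F.
Proof.
case=> _ _ _ AE; rewrite /mdot.
under eq_bigr => x _ do under eq_bigr => y _ do rewrite AE mulr_suml.
under eq_bigr => x _ do rewrite exchange_big.
rewrite exchange_big; apply: eq_bigr => a _; rewrite mulr_sumr.
by apply: eq_bigr => x _; rewrite mulr_sumr; apply: eq_bigr => y _; rewrite /rank1; ring.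
Qed.

(* Expanding B in its SVD gives
   sum_b tau_b al_b be_b <= max tau * sum_b (al_b^2 + be_b^2)/2, and Bessel's
   inequality bounds the last sum by one. *)
Lemma rank1_le_spec_norm (rows cols : finType) (B : fmat R rows cols)
    (u : rows -> R) (v : cols -> R) :
  \sum_x u x ^+ 2 <= 1 -> \sum_y v y ^+ 2 <= 1 ->
  `|mdot (rank1 u v) B| <= spec_norm B.
Proof.
move=> hu hv; have := svd_of_spec B; rewrite /spec_norm /sing_vals.
case: (svd_of B) => r [[tau p] q] Bsvd.
have [tau_gt0 po qo _] := Bsvd.
set M := \big[Num.max/0]_(a < r) tau a.
have tauM b : tau b <= M by rewrite /M (bigD1 b) //= le_max lexx.
have M_ge0 : 0 <= M.
  rewrite /M; elim/big_ind: _ => //= [x y hx hy|b _]; first by rewrite le_max hx.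
  exact: ltW.
pose al b := \sum_x u x * p b x.
pose be b := \sum_y v y * q b y.
have ha : \sum_b al b ^+ 2 <= 1 := le_trans (bessel u po) hu.
have hb : \sum_b be b ^+ 2 <= 1 := le_trans (bessel v qo) hv.
rewrite mdotC (mdot_svd _ Bsvd).
under eq_bigr do rewrite mdotC mdot_rank1 -/(al _) -/(be _).
apply: le_trans (ler_norm_sum _ _ _) _.
apply: (@le_trans _ _ (\sum_b M * ((al b ^+ 2 + be b ^+ 2) / 2))).
  apply: ler_sum => b _; rewrite !normrM (ger0_norm (ltW (tau_gt0 b))).
  have amgm : `|al b| * `|be b| <= (al b ^+ 2 + be b ^+ 2) / 2.
    rewrite -[al b ^+ 2]real_normK ?num_real // -[be b ^+ 2]real_normK ?num_real //.
    have := sqr_ge0 (`|al b| - `|be b|); lra.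
  have := tau_gt0 b; have := tauM b.
  have := normr_ge0 (al b); have := normr_ge0 (be b); nra.
rewrite -mulr_sumr -mulr_suml big_split /=; nra.
Qed.

Lemma mdot_le_trace_spec (rows cols : finType) (A B : fmat R rows cols) :
  `|mdot A B| <= trace_norm A * spec_norm B.
Proof.
have := svd_of_spec A; rewrite /trace_norm /sing_vals.
case: (svd_of A) => r [[s u] v] Asvd; have [s_gt0 uo vo _] := Asvd.
rewrite (mdot_svd _ Asvd) mulr_suml; apply: le_trans (ler_norm_sum _ _ _) _.
apply: ler_sum => a _; rewrite normrM (ger0_norm (ltW (s_gt0 a))).
apply: ler_wpM2l; first exact: ltW.
by apply: rank1_le_spec_norm; under eq_bigr do rewrite expr2; rewrite ?uo ?vo eqxx.
Qed.

End FiniteMatrices.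

Lemma dep_if_ind (P : bool) (T : Type) (f : P = true -> T) (g : P = false -> T)
  (Q : T -> Prop) : (forall e, Q (f e)) -> (forall e, Q (g e)) ->
  Q ((if P as b return P = b -> T then f else g) (erefl P)).
Proof. by move: f g; case: P => f g /=. Qed.

Section Unfolding.
Variables (K : nat) (n : 'I_K -> nat) (k : 'I_K).

Lemma merge_k (i : 'I_(n k)) (c : colidx n k) : Defs.merge i c k = i.
Proof.
rewrite /Defs.merge ffunE; apply: (@dep_if_ind _ _ _ _ (fun t => t = i)) => e.
  exact: val_inj.
by exfalso; have := negbT e; rewrite eqxx.
Qed.

Lemma merge_nk (i : 'I_(n k)) (c : colidx n k) (j : {j : 'I_K | j != k}) :
  Defs.merge i c (val j) = c j.
Proof.
rewrite /Defs.merge ffunE; apply: (@dep_if_ind _ _ _ _ (fun t => t = c j)) => e.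
  by exfalso; have := valP j; rewrite e.
by case: j e => j jk /= e; rewrite (bool_irrelevance (negbT e) jk).
Qed.

Definition rest (x : tidx n) : colidx n k := [ffun j => x (val j)].

Lemma merge_rest (x : tidx n) : Defs.merge (x k) (rest x) = x.
Proof.
apply/ffunP => j; rewrite /Defs.merge ffunE.
apply: (@dep_if_ind _ _ _ _ (fun t => t = x j)) => e; last by rewrite ffunE.
by apply: val_inj => /=; rewrite (eqP e).
Qed.

Lemma sum_merge (V : nmodType) (F : tidx n -> V) :
  \sum_x F x = \sum_(i : 'I_(n k)) \sum_(c : colidx n k) F (Defs.merge i c).
Proof.
rewrite pair_big /= (reindex (fun p : 'I_(n k) * colidx n k => Defs.merge p.1 p.2)) //.
exists (fun x : tidx n => (x k, rest x)) => [[i c] _ | x _] /=; last exact: merge_rest.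
by congr (_, _); [exact: merge_k | apply/ffunP => j; rewrite ffunE merge_nk].
Qed.

End Unfolding.

Section Tensors.
Variables (R : rcfType) (K : nat) (n : 'I_K -> nat).

Definition tdot (S T : tensor R n) : R := \sum_x S x * T x.

Lemma tdot_unfold (k : 'I_K) (S T : tensor R n) :
  tdot S T = mdot (unfold k S) (unfold k T).
Proof. exact: sum_merge. Qed.

Lemma tdot_le_trace_spec (k : 'I_K) (S T : tensor R n) :
  `|tdot S T| <= trace_norm (unfold k S) * spec_norm (unfold k T).
Proof. by rewrite (tdot_unfold k); exact: mdot_le_trace_spec. Qed.

Lemma tdotBr (S T1 T2 : tensor R n) : tdot S (tsub T1 T2) = tdot S T1 - tdot S T2.
Proof. by rewrite /tdot -sumrB; apply: eq_bigr => x _; rewrite mulrBr. Qed.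

Lemma frob2_tsum (D : 'I_K -> tensor R n) :
  frob2 (tsum D) = \sum_k frob2 (D k) + \sum_k \sum_(l | l != k) tdot (D k) (D l).
Proof.
rewrite /frob2 /tsum.
under eq_bigr => x _ do rewrite expr2 mulr_suml; under eq_bigr => x _ do
  under eq_bigr => k _ do rewrite mulr_sumr.
rewrite exchange_big -big_split /=; apply: eq_bigr => k _.
by rewrite exchange_big (bigD1 k) //=; under eq_bigr do rewrite expr2.
Qed.

Lemma tdot_diff_le (k : 'I_K) (alpha : R) (S W1 W2 : tensor R n) :
  spec_norm (unfold k W1) <= alpha -> spec_norm (unfold k W2) <= alpha ->
  `|tdot S (tsub W1 W2)| <= 2 * alpha * trace_norm (unfold k S).
Proof.
move=> W1a W2a; rewrite tdotBr; apply: le_trans (ler_normB _ _) _.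
have t_ge0 := trace_norm_ge0 (unfold k S).
have := ler_wpM2l t_ge0 W1a; have := ler_wpM2l t_ge0 W2a.
have := tdot_le_trace_spec k S W1; have := tdot_le_trace_spec k S W2; lra.
Qed.

End Tensors.

Lemma sum_offdiag_le (R : realDomainType) K (f : 'I_K -> 'I_K -> R) (c : 'I_K -> R) :
  (forall k l, l != k -> f k l <= c k) ->
  \sum_k \sum_(l | l != k) f k l <= (K%:R - 1) * \sum_k c k.
Proof.
move=> fc; rewrite mulr_sumr; apply: ler_sum => k _.
have K_gt0 : (0 < K)%N := leq_ltn_trans (leq0n k) (ltn_ord k).
apply: le_trans (ler_sum _ (fun l => fc k l)) _.
have -> : K%:R - 1 = K.-1%:R :> R by rewrite -{1}(prednK K_gt0) -natr1 addrK.
by rewrite sumr_const cardC1 card_ord mulr_natl.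
Qed.

Theorem lemma4 (R : rcfType) (K : nat) (n : 'I_K -> nat) (alpha lam : R)
    (Y Wstar : tensor R n) (Wst What : 'I_K -> tensor R n) :
  0 <= alpha -> 0 < lam ->
  Wstar = tsum Wst ->
  (forall k l : 'I_K, k != l -> spec_norm (unfold k (Wst l)) <= alpha) ->
  feasible alpha What ->
  (forall W, feasible alpha W -> objective Y lam What <= objective Y lam W) ->
  let Delta := fun k => tsub (What k) (Wst k) in
  2^-1 * \sum_(k < K) frob2 (Delta k)
    <= 2^-1 * frob2 (tsum Delta)
       + alpha * (K%:R - 1) * \sum_(k < K) trace_norm (unfold k (Delta k)).
Proof.
move=> _ _ _ Wst_spec What_feas _; cbv zeta.
set Delta := fun k => tsub (What k) (Wst k).
have cross : \sum_k \sum_(l | l != k) - tdot (Delta k) (Delta l)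
    <= (K%:R - 1) * \sum_k 2 * alpha * trace_norm (unfold k (Delta k)).
  apply: sum_offdiag_le => k l lk; apply: ler_normlW; rewrite normrN.
  have kl : k != l by rewrite eq_sym.
  rewrite /Delta; exact: (tdot_diff_le _ (What_feas l k kl) (Wst_spec k l kl)).
have crossE : \sum_k \sum_(l | l != k) tdot (Delta k) (Delta l)
    = - \sum_k \sum_(l | l != k) - tdot (Delta k) (Delta l).
  by rewrite -sumrN; apply: eq_bigr => k _; rewrite -sumrN; apply: eq_bigr => l _; rewrite opprK.
rewrite -mulr_sumr in cross; rewrite frob2_tsum crossE; move: cross; lra.
Qed.
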